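(* For $n\ge 0$ let $P_n$ denote the path graph on $n$ vertices ($P_0$ is the empty graph, $P_1$ a single vertex, and for $n\ge 2$ a tree with exactly $n-2$ vertices of degree $2$). Then, as formal power series in $x$, $$\sum_{n\ge 0} \mathrm{sa}(P_n;t)\, x^n = \frac{-1+2tx+\sqrt{1+4x^2}}{2tx-2(t^2-1)x^2}.$$
   Context: All graphs are finite, simple and undirected. For a graph $G=(V,E)$ and $V'\subseteq V$, $G|_{V'}$ denotes the induced subgraph on $V'$. The signed a-number $\mathrm{sa}(G)$ is defined recursively: $\mathrm{sa}(G)=1$ if $G$ is the empty graph (no vertices); $\mathrm{sa}(G)=0$ if $G$ has a connected component with an odd number of vertices; otherwise $\mathrm{sa}(G)=-\sum_{V'\subsetneq V}\mathrm{sa}(G|_{V'})$. The signed a-polynomial of $G$ is $\mathrm{sa}(G;t)=\sum_{V'\subseteq V}\mathrm{sa}(G|_{V'})\,t^{|V\setminus V'|}$. *)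

From HB Require Import structures.
From mathcomp Require Import all_boot all_order all_algebra.
Set Implicit Arguments. Unset Strict Implicit. Unset Printing Implicit Defensive.
Import GRing.Theory Num.Theory.
Local Open Scope ring_scope.

(* A finite simple graph on a finType T is a symmetric irreflexive relation e.
   Induced subgraphs G|_{V'} are represented by the vertex set V' : {set T}. *)


Definition induced_rel (T : finType) (e : rel T) (S : {set T}) : rel T :=
  [rel x y | [&& x \in S, y \in S & e x y]].

Definition comp_of (T : finType) (e : rel T) (S : {set T}) (x : T) : {set T} :=
  [set y in S | connect (induced_rel e S) x y].

Definition has_odd_comp (T : finType) (e : rel T) (S : {set T}) : bool :=
  [exists x in S, odd #|comp_of e S x|].

(* signed a-number, by recursion with fuel (fuel >= #|S|). *)
Fixpoint sa_aux (T : finType) (e : rel T) (k : nat) (S : {set T}) : int :=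
  match k with
  | 0%N => 1
  | k'.+1 =>
      if S == set0 then 1
      else if has_odd_comp e S then 0
      else - \sum_(S' : {set T} | S' \proper S) sa_aux e k' S'
  end.

Definition sa (T : finType) (e : rel T) (S : {set T}) : int := sa_aux e #|S| S.

Definition sa_poly (T : finType) (e : rel T) : {poly int} :=
  \sum_(S : {set T}) (sa e S)%:P * 'X^(#|T| - #|S|).

Definition path_rel (n : nat) : rel 'I_n :=
  fun i j : 'I_n => ((i : nat).+1 == j) || ((j : nat).+1 == i).

(* formal power series in x with coefficients in Z[t], as coefficient sequences *)
Definition fps := nat -> {poly int}.

Definition fps_mul (f g : fps) : fps :=
  fun n => \sum_(i < n.+1) f i * g (n - i)%N.

Definition path_sa_series : fps := fun n => sa_poly (@path_rel n).

Definition denom_series : fps := fun n =>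
  if n == 1%N then 2%:P * 'X
  else if n == 2%N then - (2%:P * ('X ^+ 2 - 1))
  else 0.

Definition one_plus_4x2 : fps := fun n =>
  if n == 0%N then 1 else if n == 2%N then 4%:P else 0.

(* numerator -1 + 2tx + s(x), where s = sqrt(1+4x^2) *)
Definition numer_series (s : fps) : fps := fun n =>
  (if n == 0%N then -1 else if n == 1%N then 2%:P * 'X else 0) + s n.

(* For a vertex set S of the path P_n the components of P_n|_S are the
   maximal runs of S, and sa(P_n|_S) is the product of c_m over the run lengths m,
   where c_m = sa(P_m) are the signed Catalan numbers (c_{m+2} = -sum c_i c_{m-i}).
   This product satisfies the recursion defining sa: summed over the subsets of S
   it factors over the runs, a run of length m+1 contributes c_m, and c_m = 0 for
   m odd.  Sorting the subsets of P_n by their first run gives A = C + t x C A for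
   A(x) = sum_n sa(P_n; t) x^n and C(x) = sum_m c_m x^m, while C = 1 - x^2 C^2
   yields sqrt(1 + 4 x^2) = 1 + 2 x^2 C; the identity then holds in Z[t][[x]],
   which is checked on the truncations modulo x^(n+1). *)

From mathcomp Require Import all_boot all_order all_algebra.
From mathcomp Require Import zify ring.
From Stdlib Require Import FunctionalExtensionality.
Set Implicit Arguments. Unset Strict Implicit. Unset Printing Implicit Defensive.
Import GRing.Theory.
Local Open Scope ring_scope.

(** * Signed Catalan numbers and weights of runs *)

(* [scatalan (2 m) = (-1)^m Catalan(m)] and [scatalan] vanishes at odd indices:
   its generating function is the solution [C] of [C = 1 - x^2 C^2]. *)
Fixpoint scatalan_rec (k n : nat) : int :=
  if k is k'.+1 then
    match n with
    | 0 => 1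
    | 1 => 0
    | n'.+2 => - \sum_(i < n'.+1) scatalan_rec k' i * scatalan_rec k' (n' - i)
    end
  else 0.

Definition scatalan (n : nat) : int := scatalan_rec n.+1 n.

Lemma scatalan_rec_stable k1 k2 n :
  (n < k1)%N -> (n < k2)%N -> scatalan_rec k1 n = scatalan_rec k2 n.
Proof.
elim: k1 k2 n => [|k1 IH] [|k2] [|[|n]] //= lt1 lt2.
congr (- _); apply: eq_bigr => i _; have := ltn_ord i => lt_in.
by rewrite (IH k2) ?(IH k2 (n - i)%N) //; lia.
Qed.

Lemma scatalan0 : scatalan 0 = 1. Proof. by []. Qed.

Lemma scatalan1 : scatalan 1 = 0. Proof. by []. Qed.

Lemma scatalanSS n :
  scatalan n.+2 = - \sum_(i < n.+1) scatalan i * scatalan (n - i).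
Proof.
transitivity (- \sum_(i < n.+1) scatalan_rec n.+2 i * scatalan_rec n.+2 (n - i)).
  by [].
congr (- _); apply: eq_bigr => i _; have := ltn_ord i => lt_in.
rewrite /scatalan (@scatalan_rec_stable n.+2 i.+1).
- by rewrite (@scatalan_rec_stable n.+2 (n - i).+1) //; lia.
all: lia.
Qed.

Lemma scatalan_odd n : odd n -> scatalan n = 0.
Proof.
elim/ltn_ind: n => [[|[|n]]] // IH odd_n.
rewrite scatalanSS big1 ?oppr0 // => i _; have := ltn_ord i => lt_in.
have [odd_i|even_i] := boolP (odd i); first by rewrite IH ?mul0r //; lia.
rewrite (IH (n - i)%N) ?mulr0 //; first lia.
by rewrite oddB ?(negbTE even_i) ?addbF //; lia.
Qed.

(* [run_weight k w] is the product of [scatalan] over the lengths of the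
   maximal runs of [true] in [w], the first run being lengthened by [k]. *)
Fixpoint run_weight (k : nat) (w : seq bool) : int :=
  match w with
  | [::] => scatalan k
  | b :: w' => if b then run_weight k.+1 w' else scatalan k * run_weight 0 w'
  end.

Lemma run_weight_cat_false k u v :
  run_weight k (u ++ false :: v) = run_weight k u * run_weight 0 v.
Proof. by elim: u k => [|[] u IH] k //=; rewrite IH // mulrA. Qed.

Lemma run_weight_nseq_false k m : run_weight k (nseq m false) = scatalan k.
Proof. by elim: m k => [|m IH] k //=; rewrite IH scatalan0 mulr1. Qed.

Lemma run_weight_nseq_true k m : run_weight k (nseq m true) = scatalan (k + m).
Proof. by elim: m k => [|m IH] k /=; rewrite ?addn0 ?IH ?addSnnS. Qed.

Lemma run_weight_nseq_false_cat m w :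
  run_weight 0 (nseq m false ++ w) = run_weight 0 w.
Proof. by elim: m => [|m IH] //=; rewrite IH scatalan0 mul1r. Qed.

Lemma run_weight_cat_nseq_false k u m :
  run_weight k (u ++ nseq m false) = run_weight k u.
Proof.
case: m => [|m]; first by rewrite cats0.
by rewrite run_weight_cat_false run_weight_nseq_false scatalan0 mulr1.
Qed.

Fixpoint submasks (w : seq bool) : seq (seq bool) :=
  match w with
  | [::] => [:: [::]]
  | b :: w' => (if b then map (cons true) (submasks w') else [::])
                 ++ map (cons false) (submasks w')
  end.

Lemma mem_submasks w u : (w \in submasks u) = all2 implb w u.
Proof.
have mem_map_cons (b c : bool) x s : (b :: x \in map (cons c) s) = (b == c) && (x \in s).
  by apply/mapP/andP => [[y ys [-> ->]]|[/eqP -> xs]]; [split | exists x].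
have nil_map_cons (c : bool) s : ([::] \in map (cons c) s) = false.
  by apply/mapP => -[].
elim: u w => [|b u IH] [|c w] //=; rewrite mem_cat.
  by case: b; rewrite /= ?in_nil !nil_map_cons.
by case: b; case: c; rewrite /= ?in_nil !mem_map_cons /= ?IH ?orbF.
Qed.

Lemma uniq_submasks w : uniq (submasks w).
Proof.
have cons_inj (b : bool) : injective (cons b) by move=> x y [].
elim: w => [|[] w IH] //=; rewrite ?cat_uniq !map_inj_uniq // IH andbT /=.
by apply/hasP => -[x /mapP [y _ ->] /mapP [z _]].
Qed.

Lemma big_submasks_cat (R : zmodType) (F : seq bool -> R) u v :
  \sum_(w <- submasks (u ++ v)) F w =
  \sum_(x <- submasks u) \sum_(y <- submasks v) F (x ++ y).
Proof.
elim: u F => [|b u IH] F /=; first by rewrite big_seq1.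
by case: b; rewrite /= ?big_cat !big_map ?IH.
Qed.

Definition weight_sum (w : seq bool) : int :=
  \sum_(x <- submasks w) run_weight 0 x.

Lemma weight_sum_nil : weight_sum [::] = 1.
Proof. by rewrite /weight_sum big_seq1. Qed.

Lemma weight_sum_cat_false u v :
  weight_sum (u ++ false :: v) = weight_sum u * weight_sum v.
Proof.
rewrite /weight_sum big_submasks_cat mulr_suml; apply: eq_bigr => x _.
by rewrite big_map mulr_sumr; apply: eq_bigr => y _; rewrite run_weight_cat_false.
Qed.

Lemma weight_sum_nseq_false_cat m w :
  weight_sum (nseq m false ++ w) = weight_sum w.
Proof.
elim: m => [|m IH] //.
rewrite -[nseq m.+1 false ++ w]/([::] ++ false :: (nseq m false ++ w)).
by rewrite weight_sum_cat_false IH weight_sum_nil mul1r.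
Qed.

Lemma weight_sum_cat_nseq_false w m :
  weight_sum (w ++ nseq m false) = weight_sum w.
Proof.
case: m => [|m]; first by rewrite cats0.
rewrite -[w ++ _]/(w ++ false :: nseq m false) weight_sum_cat_false.
by rewrite -(cats0 (nseq m false)) weight_sum_nseq_false_cat weight_sum_nil mulr1.
Qed.

Definition runs_poly (R : comNzRingType) (t : R) (k m : nat) : R :=
  \sum_(w <- submasks (nseq m true)) (run_weight k w)%:~R * t ^+ count negb w.

Lemma runs_polyS (R : comNzRingType) (t : R) k m :
  runs_poly t k m.+1 = runs_poly t k.+1 m + (scatalan k)%:~R * t * runs_poly t 0 m.
Proof.
rewrite /runs_poly /= big_cat !big_map /= mulr_sumr; congr (_ + _).
by apply: eq_bigr => w _; rewrite intrM exprS; ring.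
Qed.

Lemma runs_polyE (R : comNzRingType) (t : R) k m :
  runs_poly t k m = (scatalan (k + m))%:~R +
    t * \sum_(j < m) (scatalan (k + j))%:~R * runs_poly t 0 (m.-1 - j).
Proof.
elim: m k => [|m IH] k.
  by rewrite /runs_poly big_seq1 big_ord0 /= addn0 expr0 !mulr0 mulr1 addr0.
rewrite runs_polyS IH big_ord_recl /= addn0 subn0 addSnnS.
under [X in _ = _ + _ * (_ + X)]eq_bigr => j _.
  rewrite /bump /= add1n addnS -addSn -[(m - j.+1)%N]subSS /=.
  over.
case: m {IH} => [|m]; rewrite ?big_ord0 /=; ring.
Qed.

Lemma weight_sum_nseq_true m : weight_sum (nseq m.+1 true) = scatalan m.
Proof.
have weight_sumE k : weight_sum (nseq k true) = runs_poly (1 : int) 0 k.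
  by apply: eq_bigr => w _; rewrite expr1n mulr1 intz.
elim/ltn_ind: m => m IH; rewrite weight_sumE runs_polyE add0n big_ord_recr /=.
rewrite subnn -weight_sumE weight_sum_nil add0n mul1r mulr1 !intz.
case: m IH => [|m] IH; first by rewrite big_ord0 scatalan1 !add0r.
have -> : \sum_(i < m.+1) (scatalan (0 + i))%:~R * runs_poly 1 0 (m.+1 - i) =
          \sum_(i < m.+1) scatalan i * scatalan (m - i).
  apply: eq_bigr => i _; have := ltn_ord i => lt_im.
  by rewrite add0n intz -weight_sumE subSn // IH //; lia.
by rewrite scatalanSS addKr.
Qed.

(** * The signed a-number of induced subgraphs of a path *)

Section SignedANumber.
Variables (T : finType) (e : rel T).

Lemma sa_aux_stable k1 k2 (S : {set T}) :
  (#|S| <= k1)%N -> (#|S| <= k2)%N -> sa_aux e k1 S = sa_aux e k2 S.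
Proof.
elim: k1 k2 S => [|k1 IH] [|k2] S //=; rewrite ?leqn0 ?cards_eq0.
- by move=> /eqP -> _; rewrite eqxx.
- by move=> _ /eqP ->; rewrite eqxx.
move=> le1 le2; case: ifP => // _; case: ifP => // _; congr (- _).
by apply: eq_bigr => S' /proper_card ltS'; apply: IH; lia.
Qed.

Lemma saE (S : {set T}) :
  sa e S = if S == set0 then 1 else if has_odd_comp e S then 0
           else - \sum_(S' : {set T} | S' \proper S) sa e S'.
Proof.
rewrite /sa; have [->|S0] := eqVneq S set0; first by rewrite cards0.
have : (0 < #|S|)%N by rewrite card_gt0.
case cardS: #|S| => [|k] //= _; rewrite (negbTE S0); case: ifP => // _.
congr (- _); apply: eq_bigr => S' /proper_card; rewrite cardS => ltS'.
exact: sa_aux_stable.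
Qed.

Lemma sa_unique (f : {set T} -> int) :
  f set0 = 1 ->
  (forall S, has_odd_comp e S -> f S = 0) ->
  (forall S, S != set0 -> ~~ has_odd_comp e S ->
     \sum_(S' : {set T} | S' \subset S) f S' = 0) ->
  forall S, sa e S = f S.
Proof.
move=> f0 f_odd f_sum S; have [k] := ubnP #|S|; elim: k S => // k IH S ltSk.
rewrite saE; have [->|S0] := eqVneq S set0; first by rewrite f0.
have [/f_odd -> //|evenS] := boolP (has_odd_comp e S).
have := f_sum S S0 evenS; rewrite (bigD1 S) //= => /eqP; rewrite addr_eq0 => /eqP ->.
congr (- _); apply: eq_big => [S'|S' ltS'S]; first by rewrite properEneq andbC.
by apply: IH; have := proper_card ltS'S; lia.
Qed.

Lemma has_odd_comp_set0 : has_odd_comp e set0 = false.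
Proof. by apply/existsP => -[x]; rewrite inE. Qed.

Section ClosedSplit.
Variable S : {set T}.

Let closed_in (C : {set T}) := forall x y, x \in C -> y \in S -> e x y -> y \in C.

Lemma path_induced_closed (C : {set T}) p x : closed_in C ->
  x \in C -> path (induced_rel e S) x p ->
  path (induced_rel e C) x p && (last x p \in C).
Proof.
move=> closedC; elim: p x => [|y p IH] x Cx //= /andP [/and3P [_ Sy exy] yp].
have Cy : y \in C by exact: closedC exy.
by rewrite /induced_rel /= Cx Cy exy /= IH.
Qed.

Lemma comp_of_closed (C : {set T}) x :
  C \subset S -> closed_in C -> x \in C -> comp_of e S x = comp_of e C x.
Proof.
move=> CS closedC Cx; apply/setP => y; rewrite !inE.
apply/andP/andP => -[Sy xy].
  move/connectP: xy => [p xp ->].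
  have /andP [xp' Cp] := path_induced_closed closedC Cx xp.
  by split => //; apply/connectP; exists p.
split; first exact: (subsetP CS).
apply: connect_sub xy => u v /and3P [Cu Cv euv]; apply: connect1.
by rewrite /induced_rel /= (subsetP CS _ Cu) (subsetP CS _ Cv).
Qed.

Lemma has_odd_comp_closedU (A B : {set T}) :
  S = A :|: B -> closed_in A -> closed_in B ->
  has_odd_comp e S = has_odd_comp e A || has_odd_comp e B.
Proof.
move=> defS closedA closedB.
have AS : A \subset S by rewrite defS subsetUl.
have BS : B \subset S by rewrite defS subsetUr.
apply/existsP/orP => [[x /andP [Sx odd_x]]|[] /existsP [x /andP [Cx odd_x]]].
- move: Sx; rewrite defS inE => /orP [Ax|Bx].
    by left; apply/existsP; exists x; rewrite Ax -(comp_of_closed AS closedA Ax).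
  by right; apply/existsP; exists x; rewrite Bx -(comp_of_closed BS closedB Bx).
- by exists x; rewrite (subsetP AS _ Cx) (comp_of_closed AS closedA Cx).
- by exists x; rewrite (subsetP BS _ Cx) (comp_of_closed BS closedB Cx).
Qed.

End ClosedSplit.

End SignedANumber.

Section SetMask.
Variable n : nat.
Implicit Types S : {set 'I_n}.

Definition set_mask S : seq bool := [seq i \in S | i <- enum 'I_n].

Lemma size_set_mask S : size (set_mask S) = n.
Proof. by rewrite size_map size_enum_ord. Qed.

Lemma nth_set_mask S (i : 'I_n) : nth false (set_mask S) i = (i \in S).
Proof. by rewrite (nth_map i) ?size_enum_ord // nth_ord_enum. Qed.

Lemma set_mask_inj : injective set_mask.
Proof. by move=> S1 S2 eqS; apply/setP => i; rewrite -!nth_set_mask eqS. Qed.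

Lemma set_maskK (w : seq bool) :
  size w = n -> set_mask [set i : 'I_n | nth false w i] = w.
Proof.
move=> sz_w; apply: (@eq_from_nth _ false) => [|i]; first by rewrite size_set_mask.
by rewrite size_set_mask => lt_in; rewrite (nth_set_mask _ (Ordinal lt_in)) inE.
Qed.

Lemma set_mask_nseq S b : (forall i, (i \in S) = b) -> set_mask S = nseq n b.
Proof.
move=> memS; apply: (@eq_from_nth _ false) => [|i].
  by rewrite size_set_mask size_nseq.
rewrite size_set_mask => lt_in.
by rewrite (nth_set_mask _ (Ordinal lt_in)) memS nth_nseq lt_in.
Qed.

Lemma card_set_mask S : #|S| = count id (set_mask S).
Proof. by rewrite count_map cardE enumT /enum_mem size_filter. Qed.

Lemma all2_set_mask S1 S2 : all2 implb (set_mask S1) (set_mask S2) = (S1 \subset S2).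
Proof.
rewrite all2E !size_set_mask eqxx zip_map all_map.
by apply/allP/subsetP => [sub i|sub i _]; [exact/implyP/sub/mem_enum | exact/implyP/sub].
Qed.

Lemma big_subset_set_mask (R : zmodType) S (F : seq bool -> R) :
  \sum_(S' : {set 'I_n} | S' \subset S) F (set_mask S') =
  \sum_(w <- submasks (set_mask S)) F w.
Proof.
rewrite -big_filter -(big_map set_mask xpredT) /=; apply/perm_big/uniq_perm.
- by rewrite map_inj_uniq ?filter_uniq ?index_enum_uniq //; exact: set_mask_inj.
- exact: uniq_submasks.
move=> w; rewrite mem_submasks; apply/mapP/idP => [[S']|sub_w].
  by rewrite mem_filter => /andP [S'S _] ->; rewrite all2_set_mask.
have sz_w : size w = n by move: sub_w; rewrite all2E size_set_mask => /andP [/eqP].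
exists [set i : 'I_n | nth false w i]; last by rewrite set_maskK.
by rewrite mem_filter mem_index_enum andbT -all2_set_mask set_maskK.
Qed.

Lemma set_mask_lt S j : (j <= n)%N ->
  set_mask [set x in S | (x < j)%N] = take j (set_mask S) ++ nseq (n - j) false.
Proof.
move=> le_jn; have sz_take : size (take j (set_mask S)) = j.
  by rewrite size_takel ?size_set_mask.
apply: (@eq_from_nth _ false) => [|x].
  by rewrite size_cat sz_take size_nseq size_set_mask; lia.
rewrite size_set_mask => lt_xn; rewrite (nth_set_mask _ (Ordinal lt_xn)) inE /=.
rewrite nth_cat sz_take; case: ltnP => lt_xj; last by rewrite nth_nseq if_same andbF.
by rewrite nth_take // (nth_set_mask _ (Ordinal lt_xn)) andbT.
Qed.

Lemma set_mask_gt S j : (j < n)%N ->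
  set_mask [set x in S | (j < x)%N] = nseq j.+1 false ++ drop j.+1 (set_mask S).
Proof.
move=> lt_jn; apply: (@eq_from_nth _ false) => [|x].
  by rewrite size_cat size_drop !size_set_mask size_nseq; lia.
rewrite size_set_mask => lt_xn; rewrite nth_cat size_nseq nth_drop nth_nseq if_same.
rewrite (nth_set_mask _ (Ordinal lt_xn)) inE /= ltnNge -ltnS.
case: ltnP => lt_xj; rewrite ?andbF // andbT subnKC //.
by rewrite (nth_set_mask _ (Ordinal lt_xn)).
Qed.

End SetMask.

Lemma nth_block a L c i :
  nth false (nseq a false ++ nseq L true ++ nseq c false) i = (a <= i < a + L)%N.
Proof.
rewrite !nth_cat !size_nseq !nth_nseq !if_same.
by case: ltnP => ?; case: ltnP => ?; apply/esym; lia.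
Qed.

Lemma mask_block_or_gap (w : seq bool) :
  (exists a L c, w = nseq a false ++ nseq L true ++ nseq c false) \/
  (exists i j k, [/\ (i < j < k)%N, (k < size w)%N,
                     nth false w i, ~~ nth false w j & nth false w k]).
Proof.
elim: w => [|b w [[a [L [c ->]]] | [i [j [k [ijk lt_k wi wj wk]]]]]].
- by left; exists 0%N, 0%N, 0%N.
- case: b; last by left; exists a.+1, L, c.
  case: a => [|a]; first by left; exists 0%N, L.+1, c.
  case: L => [|L]; first by left; exists 0%N, 1%N, (a.+1 + c)%N; rewrite nseqD.
  right; exists 0%N, 1%N, a.+2; split => //=.
    by rewrite size_cat /= size_cat !size_nseq; lia.
  by rewrite nth_cat size_nseq ltnn subnn.
- by right; exists i.+1, j.+1, k.+1.
Qed.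

Section PathGraph.
Variable n : nat.
Local Notation P := (@path_rel n).
Implicit Types S : {set 'I_n}.

Lemma connect_path_interval S (x y : 'I_n) :
  (x <= y)%N -> (forall z : 'I_n, (x <= z <= y)%N -> z \in S) ->
  connect (induced_rel P S) x y.
Proof.
move: {2}(y - x)%N (erefl (y - x)%N) => d.
elim: d x => [|d IH] x dxy le_xy inS.
  by have -> : x = y by apply: ord_inj; lia.
have lt_x1n : (x.+1 < n)%N by have := ltn_ord y; lia.
apply: (@connect_trans _ _ (Ordinal lt_x1n)).
  by apply: connect1; rewrite /induced_rel /= !inS /path_rel ?eqxx //=; lia.
by apply: IH => /= [||z le_z]; [lia | lia | apply: inS; lia].
Qed.

Lemma comp_of_interval S x : x \in S ->
  (forall a b z : 'I_n, a \in S -> b \in S -> (a <= z <= b)%N -> z \in S) ->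
  comp_of P S x = S.
Proof.
move=> Sx convS; apply/setP => y; rewrite inE; have [Sy|//] := boolP (y \in S).
have sym : symmetric (induced_rel P S).
  by move=> u v; rewrite /induced_rel /= /path_rel orbC andbCA.
have [le_xy|lt_yx] := leqP x y.
  by apply: connect_path_interval => // z; apply: convS.
rewrite (sym_connect_sym sym).
by apply: connect_path_interval (ltnW lt_yx) _ => z; apply: convS.
Qed.

Lemma has_odd_comp_interval S : S != set0 ->
  (forall a b z : 'I_n, a \in S -> b \in S -> (a <= z <= b)%N -> z \in S) ->
  has_odd_comp P S = odd #|S|.
Proof.
move=> /set0Pn [x0 Sx0] convS.
apply/existsP/idP => [[x /andP [Sx]]|odd_S]; first by rewrite comp_of_interval.
by exists x0; rewrite Sx0 comp_of_interval.
Qed.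

Lemma has_odd_comp_gap S (z : 'I_n) : z \notin S ->
  has_odd_comp P S =
  has_odd_comp P [set x in S | (x < z)%N] || has_odd_comp P [set x in S | (z < x)%N].
Proof.
move=> zS; have neq_z x : x \in S -> (x : nat) != z.
  by move=> Sx; apply: contraNneq zS => /val_inj <-.
apply: has_odd_comp_closedU.
- apply/setP => x; rewrite !inE; have [Sx|] //= := boolP (x \in S).
  by have := neq_z x Sx; lia.
- move=> x y; rewrite !inE /path_rel => /andP [_ lt_xz] Sy /orP [] /eqP exy;
    rewrite Sy /=; last lia.
  by have := neq_z y Sy; lia.
- move=> x y; rewrite !inE /path_rel => /andP [_ lt_zx] Sy /orP [] /eqP exy;
    rewrite Sy /=; first lia.
  by have := neq_z y Sy; lia.
Qed.

End PathGraph.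

(* The two clauses of the recursion defining [sa], for [run_weight 0 \o set_mask]
   on the path, the second one in the form of a vanishing sum over subsets. *)
Definition run_weight_recursive n (S : {set 'I_n}) : Prop :=
  (has_odd_comp (@path_rel n) S -> run_weight 0 (set_mask S) = 0) /\
  (S != set0 -> ~~ has_odd_comp (@path_rel n) S -> weight_sum (set_mask S) = 0).

Lemma run_weight_recursive_block n (S : {set 'I_n}) a L c :
  set_mask S = nseq a false ++ nseq L true ++ nseq c false -> run_weight_recursive S.
Proof.
move=> maskS; rewrite /run_weight_recursive.
have [->|S0] := eqVneq S set0; first by rewrite has_odd_comp_set0 ?eqxx.
have memS z : (z \in S) = (a <= z < a + L)%N by rewrite -nth_set_mask maskS nth_block.
have cardS : #|S| = L by rewrite card_set_mask maskS !count_cat !count_nseq /=; lia.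
rewrite has_odd_comp_interval // ?cardS; last first.
  by move=> x y z; rewrite !memS; lia.
rewrite maskS run_weight_nseq_false_cat run_weight_cat_nseq_false run_weight_nseq_true.
rewrite weight_sum_nseq_false_cat weight_sum_cat_nseq_false.
split=> [/scatalan_odd //|_]; have : (0 < L)%N by rewrite -cardS card_gt0.
case: L {memS cardS maskS} => // L _ /negbNE odd_L.
by rewrite weight_sum_nseq_true scatalan_odd.
Qed.

Lemma run_weight_recursive_gap n (S : {set 'I_n}) (x z : 'I_n) :
  z \notin S -> x \in S -> (x < z)%N ->
  run_weight_recursive [set y in S | (y < z)%N] ->
  run_weight_recursive [set y in S | (z < y)%N] ->
  run_weight_recursive S.
Proof.
move=> zS Sx lt_xz [oddA evenA] [oddB _].
have maskS : set_mask S = take z (set_mask S) ++ false :: drop z.+1 (set_mask S).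
  by rewrite -(negbTE zS) -nth_set_mask -drop_nth ?size_set_mask ?cat_take_drop.
rewrite /run_weight_recursive (has_odd_comp_gap zS) maskS.
rewrite run_weight_cat_false weight_sum_cat_false.
rewrite -[run_weight 0 (take _ _)](run_weight_cat_nseq_false 0 _ (n - z)).
rewrite -[run_weight 0 (drop _ _)](run_weight_nseq_false_cat z.+1).
rewrite -[weight_sum (take _ _)](weight_sum_cat_nseq_false _ (n - z)).
rewrite -[weight_sum (drop _ _)](weight_sum_nseq_false_cat z.+1).
rewrite -set_mask_lt -?set_mask_gt //; last exact: ltnW.
split => [/orP [/oddA -> | /oddB ->]|_]; rewrite ?mul0r ?mulr0 //.
rewrite negb_or => /andP [/evenA -> //]; first by rewrite mul0r.
by apply/set0Pn; exists x; rewrite inE Sx.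
Qed.

Lemma run_weight_recursive_path n (S : {set 'I_n}) : run_weight_recursive S.
Proof.
have [k] := ubnP #|S|; elim: k S => // k IH S ltSk.
have [[a [L [c /run_weight_recursive_block //]]] | [i [j [l [ijl lt_ln wi wj wl]]]]] :=
  mask_block_or_gap (set_mask S).
rewrite size_set_mask in lt_ln; have /andP [lt_ij lt_jl] := ijl.
have lt_jn : (j < n)%N by lia.
pose z := Ordinal lt_jn; pose x := Ordinal (ltn_trans lt_ij lt_jn).
have Sx : x \in S by rewrite -nth_set_mask.
have Sl : Ordinal lt_ln \in S by rewrite -nth_set_mask.
have IHS (C : {set 'I_n}) : C \proper S -> run_weight_recursive C.
  by move=> /proper_card ltCS; apply: IH; lia.
apply: (@run_weight_recursive_gap _ _ x z); rewrite -?nth_set_mask //.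
all: apply/IHS/properP; split; first by apply/subsetP => y; rewrite inE => /andP [].
- by exists (Ordinal lt_ln); rewrite // inE /= negb_and ltnNge ltnW ?orbT.
- by exists x; rewrite // inE /= negb_and ltnNge ltnW ?orbT.
Qed.

Lemma sa_path n (S : {set 'I_n}) : sa (@path_rel n) S = run_weight 0 (set_mask S).
Proof.
move: S; apply: (@sa_unique _ _ (fun S => run_weight 0 (set_mask S)))
  => [|S odd_S|S S0 even_S].
- by rewrite (@set_mask_nseq _ _ false) ?run_weight_nseq_false // => i; rewrite inE.
- by case: (run_weight_recursive_path S) => /(_ odd_S).
- by rewrite big_subset_set_mask; case: (run_weight_recursive_path S) => _ /(_ S0 even_S).
Qed.

Lemma sa_poly_path n : sa_poly (@path_rel n) = runs_poly 'X 0 n.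
Proof.
rewrite /sa_poly /runs_poly card_ord -(@set_mask_nseq _ [set: 'I_n] true); last first.
  by move=> i; rewrite inE.
rewrite -big_subset_set_mask; apply: eq_big => [S|S _]; first by rewrite subsetT.
rewrite sa_path -{1}[run_weight 0 _]intz rmorph_int.
by rewrite card_set_mask -[X in (X - _)%N](size_set_mask S) -(count_predC id) addKn.
Qed.

(** * Truncated power series *)

(* [p = 0] modulo [x^N]; power series identities are checked on truncations. *)
Definition low_coef0 (R : nzRingType) (N : nat) (p : {poly R}) :=
  forall i, (i < N)%N -> p`_i = 0.

Section LowCoef0.
Variables (R : nzRingType) (N : nat).
Implicit Types p q : {poly R}.

Lemma low_coef0D p q : low_coef0 N p -> low_coef0 N q -> low_coef0 N (p + q).
Proof. by move=> p0 q0 i lt_iN; rewrite coefD p0 ?q0 ?addr0. Qed.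

Lemma low_coef0N p : low_coef0 N p -> low_coef0 N (- p).
Proof. by move=> p0 i lt_iN; rewrite coefN p0 ?oppr0. Qed.

Lemma low_coef0B p q : low_coef0 N p -> low_coef0 N q -> low_coef0 N (p - q).
Proof. by move=> p0 /low_coef0N; apply: low_coef0D. Qed.

Lemma low_coef0Ml p q : low_coef0 N p -> low_coef0 N (q * p).
Proof.
move=> p0 i lt_iN; rewrite coefMr big1 // => j _.
by rewrite p0 ?mulr0 //; have := ltn_ord j; lia.
Qed.

Lemma low_coef0Mr p q : low_coef0 N p -> low_coef0 N (p * q).
Proof.
move=> p0 i lt_iN; rewrite coefM big1 // => j _.
by rewrite p0 ?mul0r //; have := ltn_ord j; lia.
Qed.

End LowCoef0.

Lemma low_coef0_cancel (R : idomainType) N (p w : {poly R}) :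
  low_coef0 N (p * w) -> w`_0 != 0 -> low_coef0 N p.
Proof.
move=> pw0 w0_neq0; elim/ltn_ind => i IH lt_iN.
move: (pw0 i lt_iN); rewrite coefMr big_ord_recl subn0 big1 ?addr0 => [/eqP|j _].
  by rewrite mulf_eq0 (negbTE w0_neq0) orbF => /eqP.
by rewrite IH ?mul0r //= /bump /=; have := ltn_ord j; lia.
Qed.

(* Modulo [x^N]: from [C = 1 - x^2 C^2] and [s^2 = 1 + 4 x^2] we get
   [(s - 1 - 2x^2 C)(s + 1 + 2x^2 C) = 0], hence [s = 1 + 2 x^2 C] as the second
   factor is a unit; substituting it into [A = C + t x C A] gives the closed form. *)
Lemma path_gf_identity (K : idomainType) (t : {poly K}) N (a c s : {poly K}) :
  2 != 0 :> K -> s`_0 = 1 ->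
  low_coef0 N ((1 - t * 'X * c) * a - c) ->
  low_coef0 N ('X^2 * c ^+ 2 + c - 1) ->
  low_coef0 N (s ^+ 2 - (1 + 4 * 'X^2)) ->
  low_coef0 N (a * (2 * t * 'X - 2 * (t ^+ 2 - 1) * 'X^2) - (-1 + 2 * t * 'X + s)).
Proof.
move=> two_neq0 s0 gfA gfC sqr_s.
have sE : low_coef0 N (s - (1 + 2 * 'X^2 * c)).
  apply: (@low_coef0_cancel _ _ _ (s + (1 + 2 * 'X^2 * c))).
    have -> : (s - (1 + 2 * 'X^2 * c)) * (s + (1 + 2 * 'X^2 * c)) =
      (s ^+ 2 - (1 + 4 * 'X^2)) - 4 * 'X^2 * ('X^2 * c ^+ 2 + c - 1) by ring.
    exact: low_coef0B sqr_s (low_coef0Ml _ gfC).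
  by rewrite !coefD coef1 -mulrA coef0M coefXnM s0 mulr0 addr0.
apply: (@low_coef0_cancel _ _ _ (1 - t * 'X * c)); last first.
  by rewrite coefB coef1 -mulrA mulrCA coefXM subr0 oner_neq0.
set d := 2 * t * 'X - _.
have -> : (a * d - (-1 + 2 * t * 'X + s)) * (1 - t * 'X * c) =
  d * ((1 - t * 'X * c) * a - c) + 2 * t * 'X * ('X^2 * c ^+ 2 + c - 1)
  - (s - (1 + 2 * 'X^2 * c)) * (1 - t * 'X * c) by rewrite /d; ring.
apply: low_coef0B; last exact: low_coef0Mr.
by apply: low_coef0D; apply: low_coef0Ml.
Qed.

(* A series in [x] over [Z[t]] is truncated to a [{poly {poly int}}], in which
   [x] is ['X] and [t] is the constant ['X%:P]. *)
Definition trunc (N : nat) (f : fps) : {poly {poly int}} := \poly_(i < N) f i.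

Definition scatalan_series : fps := fun n => (scatalan n)%:~R.

Lemma coef_trunc N f i : (i < N)%N -> (trunc N f)`_i = f i.
Proof. by move=> lt_iN; rewrite coef_poly lt_iN. Qed.

Lemma trunc_fps_mul N f g :
  low_coef0 N (trunc N (fps_mul f g) - trunc N f * trunc N g).
Proof.
move=> i lt_iN; rewrite coefB coef_trunc // coefM; apply/eqP; rewrite subr_eq0.
apply/eqP/eq_bigr => j _; rewrite !coef_trunc //; have := ltn_ord j; lia.
Qed.

Lemma trunc_path_sa_series N :
  low_coef0 N ((1 - 'X%:P * 'X * trunc N scatalan_series) * trunc N path_sa_series
               - trunc N scatalan_series).
Proof.
move=> i lt_iN; rewrite mulrBl mul1r -!mulrA !coefB coefCM coefXM !coef_trunc //.
rewrite /path_sa_series /scatalan_series sa_poly_path runs_polyE add0n.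
case: i lt_iN => [|i] lt_iN /=; first by rewrite big_ord0 mulr0; ring.
suff -> : (trunc N scatalan_series * trunc N path_sa_series)`_i =
          \sum_(j < i.+1) (scatalan (0 + j))%:~R * runs_poly 'X 0 (i - j) by ring.
rewrite coefM; apply: eq_bigr => j _; have := ltn_ord j => lt_ji.
by rewrite !coef_trunc /path_sa_series ?sa_poly_path //; lia.
Qed.

Lemma trunc_scatalan_series N :
  low_coef0 N ('X^2 * trunc N scatalan_series ^+ 2 + trunc N scatalan_series - 1).
Proof.
move=> i lt_iN; rewrite coefB coefD coefXnM coef1 coef_trunc // /scatalan_series.
case: i lt_iN => [|[|i]] lt_iN /=; rewrite ?scatalan0 ?scatalan1 ?add0r ?subrr ?oppr0 //.
rewrite subn2 addr0 scatalanSS rmorphN rmorph_sum expr2 coefM /=.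
apply/eqP; rewrite addr_eq0 opprK; apply/eqP/eq_bigr => j _; have := ltn_ord j => lt_ji.
by rewrite !coef_trunc ?intrM //; lia.
Qed.

Lemma trunc_one_plus_4x2 N : low_coef0 N (trunc N one_plus_4x2 - (1 + 4 * 'X^2)).
Proof.
move=> i lt_iN; rewrite -polyC_natr coefB coefD coef1 coefCM coefXn coef_trunc //.
rewrite /one_plus_4x2.
case: i lt_iN => [|[|[|i]]] _ /=;
  by rewrite ?polyC_natr ?mulr0 ?mulr1 ?addr0 ?add0r ?subrr ?oppr0.
Qed.

Lemma trunc_denom_series N :
  low_coef0 N (trunc N denom_series - (2 * 'X%:P * 'X - 2 * ('X%:P ^+ 2 - 1) * 'X^2)).
Proof.
have -> : 2 * 'X%:P * 'X - 2 * ('X%:P ^+ 2 - 1) * 'X^2 =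
          (2 * 'X)%:P * 'X - (2 * ('X ^+ 2 - 1))%:P * 'X^2 :> {poly {poly int}}.
  by rewrite !rmorphM rmorphB rmorphXn /= polyC1 polyC_natr.
move=> i lt_iN.
rewrite coefB coefB !coefCM coefX coefXn coef_trunc // /denom_series.
case: i lt_iN => [|[|[|i]]] _ /=;
  by rewrite ?polyC_natr ?mulr0 ?mulr1 ?subr0 ?sub0r ?subrr.
Qed.

Lemma trunc_numer_series N s :
  low_coef0 N (trunc N (numer_series s) - (-1 + 2 * 'X%:P * 'X + trunc N s)).
Proof.
move=> i lt_iN; rewrite -polyC_natr -rmorphM !coefB !coefD coefN coef1 coefCM coefX.
rewrite !coef_trunc // /numer_series.
by case: i lt_iN => [|[|i]] _ /=; rewrite ?polyC_natr ?mulr0 ?mulr1; ring.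
Qed.

Lemma trunc_fps_sqr N s : fps_mul s s = one_plus_4x2 ->
  low_coef0 N (trunc N s ^+ 2 - (1 + 4 * 'X^2)).
Proof.
move=> sqr_s.
have -> : trunc N s ^+ 2 - (1 + 4 * 'X^2) =
    (trunc N one_plus_4x2 - (1 + 4 * 'X^2))
    - (trunc N (fps_mul s s) - trunc N s * trunc N s).
  by rewrite sqr_s; ring.
by apply: low_coef0B; [apply: trunc_one_plus_4x2 | apply: trunc_fps_mul].
Qed.

Theorem mainTheorem1 :
  forall s : fps, s 0%N = 1 -> fps_mul s s = one_plus_4x2 ->
  fps_mul path_sa_series denom_series = numer_series s.
Proof.
move=> s s0 sqr_s; apply: functional_extensionality => n.
pose N := n.+1; pose a := trunc N path_sa_series; pose D := trunc N denom_series.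
pose d : {poly {poly int}} := 2 * 'X%:P * 'X - 2 * ('X%:P ^+ 2 - 1) * 'X^2.
pose nu := -1 + 2 * 'X%:P * 'X + trunc N s.
have gf : low_coef0 N (a * d - nu).
  apply: (path_gf_identity (c := trunc N scatalan_series)).
  - by rewrite -polyC_natr polyC_eq0.
  - by rewrite coef_trunc.
  - exact: trunc_path_sa_series.
  - exact: trunc_scatalan_series.
  - exact: trunc_fps_sqr.
pose lhs := trunc N (fps_mul path_sa_series denom_series).
pose rhs := trunc N (numer_series s).
have : low_coef0 N (lhs - rhs).
  have -> : lhs - rhs = (lhs - a * D) + a * (D - d) + (a * d - nu) - (rhs - nu) by ring.
  apply: low_coef0B; last exact: trunc_numer_series.
  apply: low_coef0D => //; apply: low_coef0D; first exact: trunc_fps_mul.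
  by apply: low_coef0Ml; apply: trunc_denom_series.
by move/(_ n (ltnSn n))/eqP; rewrite coefB subr_eq0 !coef_trunc // => /eqP.
Qed.
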